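(* Let $q_1,q_2$ each be functions as in the context and define $c(t)=\int_{-\infty}^{\infty}e^{-q_1(v)}e^{-q_2(t-v)}\,dv$ for $t\in\mathbb{R}$. Then $c$ is an even, strictly positive function on $\mathbb{R}$ with $c'(t)<0$ for all $t>0$; equivalently $c(t)=e^{-g(t)}$ for an even function $g$ with $g'(t)>0$ for all $t>0$.
   Context: A function $q:\mathbb{R}\to\mathbb{R}$ is ''as in the context'' if it has the form $q(t)=k\,t^{2m}e^{\mu t^2}\prod_n\left(1+t^2/\beta_n^2\right)$, where $k>0$, $\mu\ge 0$, $m$ is a positive integer, and $(\beta_n)$ is a finite or infinite sequence of nonzero real numbers with $\sum_n \beta_n^{-2}<\infty$ (the product is taken to be $1$ if there are no $\beta_n$), and there exist constants $T>0$ and $\alpha>0$ such that $q(t)>t^{2+\alpha}$ for all real $t\ge T$. *)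

From Stdlib Require Import Reals Lra List.
Open Scope R_scope.

Fixpoint partial_prod (beta : nat -> R) (t : R) (N : nat) : R :=
  match N with
  | O => 1
  | S N' => partial_prod beta t N' * (1 + t ^ 2 / (beta N') ^ 2)
  end.

Definition finite_prod_data (P : R -> R) : Prop :=
  exists l : list R, Forall (fun b => b <> 0) l /\
    forall t, P t = fold_right (fun b acc => (1 + t ^ 2 / b ^ 2) * acc) 1 l.

Definition infinite_prod_data (P : R -> R) : Prop :=
  exists beta : nat -> R, (forall n, beta n <> 0) /\
    (exists s, Un_cv (sum_f_R0 (fun n => / (beta n) ^ 2)) s) /\
    forall t, Un_cv (partial_prod beta t) (P t).

Definition as_in_context (q : R -> R) : Prop :=
  exists (k mu : R) (m : nat) (P : R -> R),
    0 < k /\ 0 <= mu /\ (1 <= m)%nat /\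
    (finite_prod_data P \/ infinite_prod_data P) /\
    (forall t, q t = k * t ^ (2 * m) * exp (mu * t ^ 2) * P t) /\
    exists T alpha, 0 < T /\ 0 < alpha /\
      forall t, T <= t -> q t > Rpower t (2 + alpha).

Definition improper_integral_R (f : R -> R) (l : R) : Prop :=
  (forall a b, inhabited (Riemann_integrable f a b)) /\
  forall eps, 0 < eps -> exists M, forall a b (pr : Riemann_integrable f a b),
    a <= - M -> M <= b -> Rabs (RiemannInt pr - l) < eps.

From Stdlib Require Import Reals Lra Lia List ClassicalEpsilon FunctionalExtensionality.
From Coquelicot Require Import Coquelicot.
Open Scope R_scope.

(* For q as in the context, f = exp (- q) is smooth, even, positive, decays at
   least like exp (- |x|), and its derivative d = - q' exp (- q) is bounded,
   continuous and negative on (0, +oo).  We call such a pair (f, d) a decay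
   profile.  For two decay profiles the convolution
       c t = int f1 v * f2 (t - v) dv
   exists as an improper Riemann integral, is even and positive, and is
   differentiable with c' t = int f1 v * d2 (t - v) dv; folding this integral
   around 0 with the oddness of d2 writes c' t as the integral over (0, +oo)
   of d2 u * (f1 (t - u) - f1 (t + u)), which is negative for t > 0 because
   f1 decreases away from 0.  Then g = - ln c gives the second formulation. *)

Lemma ex_RInt_continuity (f : R -> R) (a b : R) : continuity f -> ex_RInt f a b.
Proof.
  intro Hf. apply (ex_RInt_continuous (V := R_CompleteNormedModule)).
  intros z _. apply continuity_pt_filterlim, Hf.
Qed.

Lemma continuity_comp_sub (h : R -> R) (s : R) : continuity h -> continuity (fun v => h (s - v)).
Proof.
  intro Hh. apply (continuity_comp (fun v => s - v) h); [|exact Hh].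
  apply continuity_minus;
    [apply continuity_const; intros ? ?; reflexivity | apply derivable_continuous, derivable_id].
Qed.

Lemma RInt_Chasles_R (f : R -> R) (a b c : R) : continuity f ->
  RInt f a b + RInt f b c = RInt f a c.
Proof. intro Hf. apply (RInt_Chasles (V := R_CompleteNormedModule)); apply ex_RInt_continuity, Hf. Qed.

Lemma RInt_Chasles_diff (f : R -> R) (a b c : R) : continuity f ->
  RInt f a c - RInt f a b = RInt f b c.
Proof. intro Hf. rewrite <- (RInt_Chasles_R f a b c Hf). ring. Qed.

Lemma is_RInt_comp_sub (h : R -> R) (s a b : R) : ex_RInt h (s - b) (s - a) ->
  is_RInt (fun v => h (s - v)) a b (RInt h (s - b) (s - a)).
Proof.
  intro Hh.
  assert (Hl : is_RInt h (-1 * a + s) (-1 * b + s) (opp (RInt h (s - b) (s - a)))).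
  { rewrite opp_RInt_swap by exact Hh.
    replace (-1 * a + s) with (s - a) by ring. replace (-1 * b + s) with (s - b) by ring.
    apply (RInt_correct (V := R_CompleteNormedModule)), ex_RInt_swap, Hh. }
  apply is_RInt_opp, is_RInt_comp_lin in Hl. rewrite opp_opp in Hl.
  apply (is_RInt_ext _ _ a b _) with (2 := Hl). intros x _.
  unfold opp, scal; simpl; unfold mult; simpl. replace (-1 * x + s) with (s - x) by ring. ring.
Qed.

Lemma RInt_comp_sub (h : R -> R) (s a b : R) : ex_RInt h (s - b) (s - a) ->
  RInt (fun v => h (s - v)) a b = RInt h (s - b) (s - a).
Proof. intro Hh. apply is_RInt_unique, is_RInt_comp_sub, Hh. Qed.

Lemma RInt_fold (g : R -> R) (S : R) : continuity g ->
  RInt g (- S) S = RInt (fun u => g u + g (- u)) 0 S.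
Proof.
  intro Hg. rewrite <- (RInt_Chasles_R g (- S) 0 S Hg).
  assert (E : RInt (fun v => g (0 - v)) 0 S = RInt g (- S) 0).
  { rewrite RInt_comp_sub by apply ex_RInt_continuity, Hg. f_equal; ring. }
  rewrite <- E. symmetry. apply is_RInt_unique.
  apply (is_RInt_ext (fun u => g u + g (0 - u))); [intros x _; rewrite Rminus_0_l; reflexivity|].
  rewrite Rplus_comm.
  exact (is_RInt_plus _ _ _ _ _ _ (RInt_correct _ _ _ (ex_RInt_continuity g 0 S Hg))
           (RInt_correct _ _ _ (ex_RInt_continuity _ 0 S (continuity_comp_sub g 0 Hg)))).
Qed.

Lemma RInt_nonpos (f : R -> R) (a b : R) : a <= b -> ex_RInt f a b ->
  (forall x, a < x < b -> f x <= 0) -> RInt f a b <= 0.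
Proof.
  intros Hab Hf Hneg. apply Rle_trans with (RInt (fun _ => 0) a b).
  - apply RInt_le; [exact Hab | exact Hf | apply ex_RInt_const | exact Hneg].
  - rewrite RInt_const. unfold scal; simpl; unfold mult; simpl. lra.
Qed.

Lemma RInt_neg (f : R -> R) (a b : R) : a < b -> continuity f ->
  (forall x, a < x < b -> f x < 0) -> RInt f a b < 0.
Proof.
  intros Hab Hf Hneg. apply Rlt_le_trans with (RInt (fun _ => 0) a b).
  - apply RInt_lt;
      [exact Hab | intros; apply continuous_const | intros x _; apply continuity_pt_filterlim, Hf
          | exact Hneg].
  - rewrite RInt_const. unfold scal; simpl; unfold mult; simpl. lra.
Qed.

(* Improper integrals over the line. *)

Lemma improper_RInt (h : R -> R) (l : R) :
  improper_integral_R h l <->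
  (forall a b, ex_RInt h a b) /\
  (forall eps, 0 < eps -> exists M, forall a b, a <= - M -> M <= b -> Rabs (RInt h a b - l) < eps).
Proof.
  split.
  - intros [Hi Hc]. split.
    + intros a b. destruct (Hi a b) as [pr]. apply ex_RInt_Reals_1, pr.
    + intros eps He. destruct (Hc eps He) as [M HM]. exists M. intros a b Ha Hb.
      destruct (Hi a b) as [pr]. rewrite (RInt_Reals _ _ _ pr). apply HM; assumption.
  - intros [Hi Hc]. split.
    + intros a b. constructor. apply ex_RInt_Reals_0, Hi.
    + intros eps He. destruct (Hc eps He) as [M HM]. exists M. intros a b pr Ha Hb.
      rewrite <- (RInt_Reals _ _ _ pr). apply HM; assumption.
Qed.

Lemma improper_unique (h : R -> R) (l1 l2 : R) :
  improper_integral_R h l1 -> improper_integral_R h l2 -> l1 = l2.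
Proof.
  rewrite !improper_RInt. intros [_ H1] [_ H2]. apply cond_eq. intros eps He.
  destruct (H1 (eps / 2)) as [M1 HM1]; [lra|]. destruct (H2 (eps / 2)) as [M2 HM2]; [lra|].
  pose proof (Rmax_l M1 M2). pose proof (Rmax_r M1 M2). set (M := Rmax M1 M2) in *.
  specialize (HM1 (- M) M ltac:(lra) ltac:(lra)). specialize (HM2 (- M) M ltac:(lra) ltac:(lra)).
  replace (l1 - l2) with ((RInt h (- M) M - l2) - (RInt h (- M) M - l1)) by ring.
  eapply Rle_lt_trans; [apply Rabs_triang|]. rewrite Rabs_Ropp. lra.
Qed.

Lemma improper_ext (f g : R -> R) (l : R) :
  (forall x, f x = g x) -> improper_integral_R f l -> improper_integral_R g l.
Proof. intros E H. replace g with f; [exact H | apply functional_extensionality, E]. Qed.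

Lemma improper_lin (f g : R -> R) (j k lf lg : R) :
  improper_integral_R f lf -> improper_integral_R g lg ->
  improper_integral_R (fun x => j * f x + k * g x) (j * lf + k * lg).
Proof.
  rewrite !improper_RInt. intros [Ef Cf] [Eg Cg].
  assert (Is : forall a b, is_RInt (fun x => j * f x + k * g x) a b (j * RInt f a b + k * RInt g a b)).
  { intros a b. exact (is_RInt_plus _ _ _ _ _ _ (is_RInt_scal _ _ _ j _ (RInt_correct _ _ _ (Ef a b)))
                         (is_RInt_scal _ _ _ k _ (RInt_correct _ _ _ (Eg a b)))). }
  split; [intros a b; eexists; apply Is|]. intros eps He.
  set (e := eps / (2 * (1 + Rabs j + Rabs k))). pose proof (Rabs_pos j). pose proof (Rabs_pos k).
  assert (He' : 0 < e) by (apply Rdiv_lt_0_compat; lra).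
  assert (Ee : e * (1 + Rabs j + Rabs k) = eps / 2) by (unfold e; field; lra).
  destruct (Cf e He') as [Mf HMf]. destruct (Cg e He') as [Mg HMg].
  exists (Rmax Mf Mg). intros a b Ha Hb. pose proof (Rmax_l Mf Mg). pose proof (Rmax_r Mf Mg).
  rewrite (is_RInt_unique _ _ _ _ (Is a b)).
  replace (j * RInt f a b + k * RInt g a b - (j * lf + k * lg))
    with (j * (RInt f a b - lf) + k * (RInt g a b - lg)) by ring.
  eapply Rle_lt_trans; [apply Rabs_triang|]. rewrite !Rabs_mult.
  specialize (HMf a b ltac:(lra) ltac:(lra)). specialize (HMg a b ltac:(lra) ltac:(lra)).
  assert (Rabs j * Rabs (RInt f a b - lf) <= Rabs j * e) by (apply Rmult_le_compat_l; lra).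
  assert (Rabs k * Rabs (RInt g a b - lg) <= Rabs k * e) by (apply Rmult_le_compat_l; lra).
  nra.
Qed.

Lemma improper_reflect (h : R -> R) (s l : R) :
  improper_integral_R h l -> improper_integral_R (fun v => h (s - v)) l.
Proof.
  rewrite !improper_RInt. intros [Eh Ch]. split.
  - intros a b. eexists. apply is_RInt_comp_sub, Eh.
  - intros eps He. destruct (Ch eps He) as [M HM]. exists (M + Rabs s). intros a b Ha Hb.
    pose proof (Rle_abs s). pose proof (Rle_abs (- s)). rewrite Rabs_Ropp in *.
    rewrite RInt_comp_sub by apply Eh. apply HM; lra.
Qed.

Lemma improper_sym_le (h : R -> R) (l S0 K : R) : improper_integral_R h l ->
  (forall S, S0 <= S -> RInt h (- S) S <= K) -> l <= K.
Proof.
  rewrite improper_RInt. intros [_ Ch] HK. apply Rnot_lt_le. intro Hlt.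
  destruct (Ch (l - K)) as [M HM]; [lra|]. pose proof (Rmax_l S0 M). pose proof (Rmax_r S0 M).
  specialize (HK _ (Rmax_l S0 M)). specialize (HM (- Rmax S0 M) (Rmax S0 M) ltac:(lra) ltac:(lra)).
  apply Rabs_def2 in HM. lra.
Qed.

Lemma improper_sym_ge (h : R -> R) (l S0 K : R) : improper_integral_R h l ->
  (forall S, S0 <= S -> K <= RInt h (- S) S) -> K <= l.
Proof.
  rewrite improper_RInt. intros [_ Ch] HK. apply Rnot_lt_le. intro Hlt.
  destruct (Ch (K - l)) as [M HM]; [lra|]. pose proof (Rmax_l S0 M). pose proof (Rmax_r S0 M).
  specialize (HK _ (Rmax_l S0 M)). specialize (HM (- Rmax S0 M) (Rmax S0 M) ltac:(lra) ltac:(lra)).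
  apply Rabs_def2 in HM. lra.
Qed.

Lemma improper_sym_abs (h : R -> R) (l S0 K : R) : improper_integral_R h l ->
  (forall S, S0 <= S -> Rabs (RInt h (- S) S) <= K) -> Rabs l <= K.
Proof.
  intros Hh HK. apply Rabs_le. split.
  - apply (improper_sym_ge h l S0); [exact Hh|]. intros S HS.
    destruct (proj1 (Rabs_le_between _ _) (HK S HS)); assumption.
  - apply (improper_sym_le h l S0); [exact Hh|]. intros S HS.
    destruct (proj1 (Rabs_le_between _ _) (HK S HS)); assumption.
Qed.

Lemma exp_le (x y : R) : x <= y -> exp x <= exp y.
Proof. intros [H|H]; [left; apply exp_increasing, H | subst; lra]. Qed.

Lemma continuity_exp : continuity exp.
Proof. apply derivable_continuous, derivable_exp. Qed.

Lemma exp_neg_small (M eps : R) : 0 < eps ->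
  exists X, 0 <= X /\ forall x, X <= x -> M * exp (- x) < eps.
Proof.
  intro He. exists (Rabs M / eps). split; [apply Rdiv_le_0_compat; [apply Rabs_pos | lra]|].
  intros x Hx. pose proof (Rle_abs M). pose proof (exp_pos (- x)).
  assert (HM : Rabs M < eps * (1 + x)).
  { apply Rmult_le_compat_l with (r := eps) in Hx; [|lra].
    replace (eps * (Rabs M / eps)) with (Rabs M) in Hx by (field; lra). lra. }
  assert (Hx0 : 0 <= x) by (apply Rle_trans with (2 := Hx), Rdiv_le_0_compat; [apply Rabs_pos | lra]).
  assert (Hexp : exp (- x) * (1 + x) <= 1).
  { rewrite exp_Ropp. pose proof (exp_ineq1_le x). pose proof (exp_pos x).
    apply Rmult_le_reg_l with (exp x); [lra|]. field_simplify; lra. }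
  nra.
Qed.

Definition exp_decay (h : R -> R) (M : R) : Prop := forall x, Rabs (h x) <= M * exp (- Rabs x).

Lemma exp_decay_reflect (h : R -> R) (M : R) : exp_decay h M -> exp_decay (fun v => h (0 - v)) M.
Proof. intros H x. rewrite <- (Rabs_Ropp x), Rminus_0_l. apply H. Qed.

Lemma exp_decay_coef_nonneg (h : R -> R) (M : R) : exp_decay h M -> 0 <= M.
Proof.
  intro H. specialize (H 0). rewrite Rabs_R0, Ropp_0, exp_0, Rmult_1_r in H.
  pose proof (Rabs_pos (h 0)). lra.
Qed.

Lemma RInt_exp_decay_tail (h : R -> R) (M b b' : R) : continuity h -> exp_decay h M ->
  0 <= b <= b' -> Rabs (RInt h b b') <= M * exp (- b).
Proof.
  intros Hh Hd [H0 Hbb]. pose proof (exp_decay_coef_nonneg h M Hd).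
  assert (Ee : is_RInt (fun x => M * exp (- x)) b b' (minus (- M * exp (- b')) (- M * exp (- b)))).
  { apply (is_RInt_derive (V := R_CompleteNormedModule) (fun x => - M * exp (- x))).
    - intros x _. auto_derive; [exact I | ring].
    - intros x _. apply continuity_pt_filterlim.
      apply (continuity_scal (fun x => exp (- x))).
      apply (continuity_comp Ropp exp);
        [apply continuity_opp, derivable_continuous, derivable_id | apply continuity_exp]. }
  apply Rle_trans with (RInt (fun x => Rabs (h x)) b b').
  { apply abs_RInt_le; [exact Hbb | apply ex_RInt_continuity, Hh]. }
  apply Rle_trans with (M * exp (- b) - M * exp (- b')).
  { replace (M * exp (- b) - M * exp (- b')) with (RInt (fun x => M * exp (- x)) b b')
      by (rewrite (is_RInt_unique _ _ _ _ Ee); unfold minus, plus, opp; simpl; ring).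
    apply RInt_le; [exact Hbb | | eexists; exact Ee |].
    - apply ex_RInt_norm, ex_RInt_continuity, Hh.
    - intros x Hx. rewrite <- (Rabs_right x) at 2 by lra. apply Hd. }
  pose proof (exp_pos (- b')). assert (0 <= M * exp (- b')) by (apply Rmult_le_pos; lra). lra.
Qed.

Lemma cv_dist_le (u : nat -> R) (L x K : R) (N : nat) : Un_cv u L ->
  (forall n, (N <= n)%nat -> Rabs (x - u n) <= K) -> Rabs (x - L) <= K.
Proof.
  intros Hu Hb. apply Rnot_lt_le. intro Hlt.
  destruct (Hu (Rabs (x - L) - K)) as [N0 HN0]; [lra|].
  specialize (HN0 (max N N0) (Nat.le_max_r _ _)). specialize (Hb (max N N0) (Nat.le_max_l _ _)).
  unfold Rdist in HN0. pose proof (Rabs_triang (x - u (max N N0)) (u (max N N0) - L)) as Htri.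
  replace (x - u (max N N0) + (u (max N N0) - L)) with (x - L) in Htri by ring. lra.
Qed.

(* int_0^b h converges as b -> +oo, with error at most M exp (- b) (Cauchy criterion on integer
   endpoints). *)
Lemma half_line_limit (h : R -> R) (M : R) : continuity h -> exp_decay h M ->
  exists L, forall b, 0 <= b -> Rabs (RInt h 0 b - L) <= M * exp (- b).
Proof.
  intros Hh Hd.
  assert (Tail : forall b b', 0 <= b <= b' -> Rabs (RInt h 0 b' - RInt h 0 b) <= M * exp (- b)).
  { intros b b' Hb. rewrite RInt_Chasles_diff by exact Hh.
    apply RInt_exp_decay_tail; assumption. }
  set (u := fun n => RInt h 0 (INR n)).
  assert (Cu : Cauchy_crit u).
  { intros eps He. destruct (exp_neg_small M eps He) as [X [_ HX]].
    destruct (INR_unbounded X) as [N HN]. exists N. intros n m Hn Hm. unfold Rdist, u.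
    apply le_INR in Hn, Hm. pose proof (pos_INR m). pose proof (pos_INR n).
    destruct (Rle_dec (INR m) (INR n)).
    - eapply Rle_lt_trans; [apply Tail; lra | apply HX; lra].
    - rewrite Rabs_minus_sym. eapply Rle_lt_trans; [apply Tail; lra | apply HX; lra]. }
  destruct (Rcomplete.R_complete u Cu) as [L HL]. exists L. intros b Hb.
  destruct (INR_unbounded b) as [N HN]. apply cv_dist_le with u N; [exact HL|].
  intros n Hn. apply le_INR in Hn. unfold u. rewrite Rabs_minus_sym. apply Tail; lra.
Qed.

Lemma improper_of_exp_decay (h : R -> R) (M : R) : continuity h -> exp_decay h M ->
  exists l, improper_integral_R h l.
Proof.
  intros Hh Hd.
  destruct (half_line_limit h M Hh Hd) as [Lp HLp].
  destruct (half_line_limit (fun v => h (0 - v)) M (continuity_comp_sub h 0 Hh)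
             (exp_decay_reflect h M Hd)) as [Lm HLm].
  exists (Lm + Lp). apply improper_RInt. split; [intros; apply ex_RInt_continuity, Hh|].
  intros eps He. destruct (exp_neg_small (2 * M) eps He) as [X [HX0 HX]].
  exists X. intros a b Ha Hb. rewrite <- (RInt_Chasles_R h a 0 b Hh).
  assert (Ea : RInt h a 0 = RInt (fun v => h (0 - v)) 0 (- a)).
  { rewrite RInt_comp_sub by apply ex_RInt_continuity, Hh. f_equal; ring. }
  specialize (HLp b ltac:(lra)). specialize (HLm (- a) ltac:(lra)). rewrite <- Ea in HLm.
  specialize (HX X (Rle_refl X)). pose proof (exp_decay_coef_nonneg h M Hd).
  assert (M * exp (- - a) <= M * exp (- X)) by (apply Rmult_le_compat_l, exp_le; lra).
  assert (M * exp (- b) <= M * exp (- X)) by (apply Rmult_le_compat_l, exp_le; lra).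
  replace (RInt h a 0 + RInt h 0 b - (Lm + Lp)) with ((RInt h a 0 - Lm) + (RInt h 0 b - Lp)) by ring.
  eapply Rle_lt_trans; [apply Rabs_triang | lra].
Qed.

Lemma RInt_sym_split_bound (phi : R -> R) (M eta R S : R) : continuity phi -> exp_decay phi M ->
  (forall x, Rabs x <= R -> Rabs (phi x) <= eta) -> 0 <= R <= S ->
  Rabs (RInt phi (- S) S) <= 2 * R * eta + 2 * M * exp (- R).
Proof.
  intros Hphi Hd Hmid HRS.
  rewrite <- (RInt_Chasles_R phi (- S) (- R) S Hphi), <- (RInt_Chasles_R phi (- R) R S Hphi).
  assert (Left : Rabs (RInt phi (- S) (- R)) <= M * exp (- R)).
  { assert (E : RInt (fun v => phi (0 - v)) R S = RInt phi (- S) (- R)).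
    { rewrite RInt_comp_sub by apply ex_RInt_continuity, Hphi. f_equal; ring. }
    rewrite <- E.
    apply RInt_exp_decay_tail;
      [apply continuity_comp_sub, Hphi | apply exp_decay_reflect, Hd | exact HRS]. }
  assert (Right : Rabs (RInt phi R S) <= M * exp (- R)) by (apply RInt_exp_decay_tail; assumption).
  assert (Mid : Rabs (RInt phi (- R) R) <= 2 * R * eta).
  { apply Rle_trans with (RInt (fun x => Rabs (phi x)) (- R) R).
    { apply abs_RInt_le; [lra | apply ex_RInt_continuity, Hphi]. }
    apply Rle_trans with (RInt (fun _ => eta) (- R) R).
    { apply RInt_le; [lra | apply ex_RInt_norm, ex_RInt_continuity, Hphi | apply ex_RInt_const |].
      intros x Hx. apply Hmid, Rabs_le. lra. }
    rewrite RInt_const. unfold scal; simpl; unfold mult; simpl. lra. }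
  pose proof (Rabs_triang (RInt phi (- S) (- R)) (RInt phi (- R) R + RInt phi R S)).
  pose proof (Rabs_triang (RInt phi (- R) R) (RInt phi R S)). lra.
Qed.

(* Decay profiles and their convolution. *)

(* f is differentiable with derivative d, and (f, d) has the shape of exp (- q), q a context weight. *)
Record decay_profile (f d : R -> R) (K B : R) : Prop := {
  prof_deriv : forall x, derivable_pt_lim f x (d x);
  prof_dcont : continuity d;
  prof_even : forall x, f (- x) = f x;
  prof_pos : forall x, 0 < f x;
  prof_decay : forall x, f x <= K * exp (- Rabs x);
  prof_dbound : forall x, Rabs (d x) <= B;
  prof_dneg : forall x, 0 < x -> d x < 0 }.
Arguments prof_deriv {f d K B}.
Arguments prof_dcont {f d K B}.
Arguments prof_even {f d K B}.
Arguments prof_pos {f d K B}.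
Arguments prof_decay {f d K B}.
Arguments prof_dbound {f d K B}.
Arguments prof_dneg {f d K B}.

Lemma diff_quotient_mvt (f d : R -> R) (x h : R) : (forall z, derivable_pt_lim f z (d z)) -> h <> 0 ->
  exists xi, (f (x + h) - f x) / h = d xi /\ Rabs (xi - x) <= Rabs h.
Proof.
  intros Hd Hh. destruct (Rlt_or_le 0 h) as [Hpos|Hneg].
  - destruct (MVT_cor2 f d x (x + h) ltac:(lra) (fun z _ => Hd z)) as [xi [E Hxi]].
    exists xi. split; [rewrite E; field; exact Hh|]. rewrite !Rabs_right; lra.
  - destruct (MVT_cor2 f d (x + h) x ltac:(lra) (fun z _ => Hd z)) as [xi [E Hxi]].
    exists xi. split.
    + replace (f (x + h) - f x) with (- (f x - f (x + h))) by ring. rewrite E. field. exact Hh.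
    + rewrite (Rabs_left1 h), Rabs_left1; lra.
Qed.

Section Profile.
Context {f d : R -> R} {K B : R} (Hp : decay_profile f d K B).

Lemma prof_cont : continuity f.
Proof. intro x. apply derivable_continuous_pt. exists (d x). apply (prof_deriv Hp). Qed.

Lemma prof_exp_decay : exp_decay f K.
Proof. intro x. rewrite Rabs_right; [apply (prof_decay Hp) | apply Rle_ge, Rlt_le, (prof_pos Hp)]. Qed.

Lemma prof_le : forall x, f x <= K.
Proof.
  intro x. pose proof (exp_decay_coef_nonneg f K prof_exp_decay).
  assert (exp (- Rabs x) <= 1) by (rewrite <- exp_0; apply exp_le; pose proof (Rabs_pos x); lra).
  pose proof (prof_decay Hp x). nra.
Qed.

Lemma prof_dodd : forall x, d (- x) = - d x.
Proof.
  intro x. assert (H : derivable_pt_lim f x (d (- x) * -1)).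
  { apply derivable_pt_lim_ext with (f := fun y => f (- y)); [intro y; apply (prof_even Hp)|].
    apply (derivable_pt_lim_comp Ropp f).
    - apply derivable_pt_lim_opp, derivable_pt_lim_id.
    - apply (prof_deriv Hp). }
  pose proof (uniqueness_limite f x _ _ H (prof_deriv Hp x)). lra.
Qed.

Lemma prof_decreasing : forall x y, 0 <= x < y -> f y < f x.
Proof.
  intros x y Hxy. destruct (MVT_cor2 f d x y ltac:(lra) (fun z _ => prof_deriv Hp z)) as [c [E Hc]].
  pose proof (prof_dneg Hp c ltac:(lra)). assert (d c * (y - x) < 0) by (apply Rmult_neg_pos; lra).
  lra.
Qed.

Lemma prof_shift_decreasing : forall t u, 0 < t -> 0 < u -> f (t + u) < f (t - u).
Proof.
  intros t u Ht Hu. destruct (Rle_dec 0 (t - u)).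
  - apply prof_decreasing. lra.
  - rewrite <- (prof_even Hp (t - u)). apply prof_decreasing. lra.
Qed.

End Profile.

Definition improper_value (h : R -> R) : R := epsilon (inhabits 0) (improper_integral_R h).

Lemma improper_value_spec (h : R -> R) : (exists l, improper_integral_R h l) ->
  improper_integral_R h (improper_value h).
Proof. intro H. exact (epsilon_spec (inhabits 0) (improper_integral_R h) H). Qed.

Definition conv (f g : R -> R) (t : R) : R := improper_value (fun v => f v * g (t - v)).

Lemma conv_improper (f g : R -> R) (K G t : R) : continuity f -> exp_decay f K ->
  continuity g -> (forall x, Rabs (g x) <= G) ->
  improper_integral_R (fun v => f v * g (t - v)) (conv f g t).
Proof.
  intros Hf Hdf Hg HG. apply improper_value_spec.
  apply (improper_of_exp_decay _ (K * G)).
  - apply continuity_mult; [exact Hf | apply continuity_comp_sub, Hg].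
  - intro v. rewrite Rabs_mult. pose proof (exp_pos (- Rabs v)). pose proof (Rabs_pos (g (t - v))).
    pose proof (Rabs_pos (f v)). pose proof (Hdf v). pose proof (HG (t - v)). nra.
Qed.

Section Convolution.
Context {f1 d1 f2 d2 : R -> R} {K1 B1 K2 B2 : R}.
Context (Hp1 : decay_profile f1 d1 K1 B1) (Hp2 : decay_profile f2 d2 K2 B2).

Lemma conv_profile_improper (t : R) : improper_integral_R (fun v => f1 v * f2 (t - v)) (conv f1 f2 t).
Proof.
  apply (conv_improper _ _ K1 K2); [apply (prof_cont Hp1) | apply (prof_exp_decay Hp1)
    | apply (prof_cont Hp2)|].
  intro x. rewrite Rabs_right; [apply (prof_le Hp2) | apply Rle_ge, Rlt_le, (prof_pos Hp2)].
Qed.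

Lemma conv_deriv_improper (t : R) : improper_integral_R (fun v => f1 v * d2 (t - v)) (conv f1 d2 t).
Proof.
  apply (conv_improper _ _ K1 B2); [apply (prof_cont Hp1) | apply (prof_exp_decay Hp1)
    | apply (prof_dcont Hp2) | apply (prof_dbound Hp2)].
Qed.

(* c is even: reflect v |-> - v and use the evenness of f1 and f2. *)
Lemma conv_even (t : R) : conv f1 f2 (- t) = conv f1 f2 t.
Proof.
  apply (improper_unique (fun v => f1 v * f2 (t - v))); [|apply conv_profile_improper].
  apply (improper_ext (fun v => f1 (0 - v) * f2 (- t - (0 - v)))).
  - intro v. rewrite Rminus_0_l, (prof_even Hp1), <- (prof_even Hp2 (t - v)). f_equal. f_equal. ring.
  - apply (improper_reflect (fun v => f1 v * f2 (- t - v))), conv_profile_improper.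
Qed.

(* c is positive: it dominates the integral over [-1, 1] of a positive integrand. *)
Lemma conv_pos (t : R) : 0 < conv f1 f2 t.
Proof.
  set (h := fun v => f1 v * f2 (t - v)).
  assert (Hh : continuity h)
    by (apply continuity_mult; [apply (prof_cont Hp1) | apply continuity_comp_sub, (prof_cont Hp2)]).
  assert (Hpos : forall v, 0 < h v)
    by (intro v; apply Rmult_lt_0_compat; [apply (prof_pos Hp1) | apply (prof_pos Hp2)]).
  apply Rlt_le_trans with (RInt h (-1) 1).
  { apply RInt_gt_0; [lra | intros; apply Hpos | intros x _; apply continuity_pt_filterlim, Hh]. }
  apply (improper_sym_ge h _ 1); [apply conv_profile_improper|]. intros S HS.
  rewrite <- (RInt_Chasles_R h (- S) (-1) S Hh), <- (RInt_Chasles_R h (-1) 1 S Hh).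
  assert (0 <= RInt h (- S) (-1))
    by (apply RInt_ge_0; [lra | apply ex_RInt_continuity, Hh | intros; apply Rlt_le, Hpos]).
  assert (0 <= RInt h 1 S)
    by (apply RInt_ge_0; [lra | apply ex_RInt_continuity, Hh | intros; apply Rlt_le, Hpos]).
  lra.
Qed.

(* The candidate derivative conv f1 d2 is negative on (0, +oo): fold around 0 using oddness of d2. *)
Lemma conv_deriv_neg (t : R) : 0 < t -> conv f1 d2 t < 0.
Proof.
  intro Ht.
  set (g := fun u => f1 (t - u) * d2 u).
  set (psi := fun u => d2 u * (f1 (t - u) - f1 (t + u))).
  assert (Hg : continuity g).
  { apply continuity_mult; [apply continuity_comp_sub, (prof_cont Hp1) | apply (prof_dcont Hp2)]. }
  assert (Hpsi : continuity psi).
  { apply continuity_mult; [apply (prof_dcont Hp2)|]. apply continuity_minus.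
    - apply continuity_comp_sub, (prof_cont Hp1).
    - apply (continuity_comp (fun u => t + u) f1); [|apply (prof_cont Hp1)].
      apply continuity_plus;
        [apply continuity_const; intros ? ?; reflexivity | apply derivable_continuous, derivable_id]. }
  assert (Hfold : forall u, g u + g (- u) = psi u).
  { intro u. unfold g, psi. rewrite (prof_dodd Hp2). replace (t - - u) with (t + u) by ring. ring. }
  assert (Hneg : forall u, 0 < u -> psi u < 0).
  { intros u Hu. apply Rmult_neg_pos; [apply (prof_dneg Hp2 u Hu)|].
    pose proof (prof_shift_decreasing Hp1 t u Ht Hu). lra. }
  apply Rle_lt_trans with (RInt psi 0 1);
    [| apply RInt_neg; [lra | exact Hpsi | intros x Hx; apply Hneg; lra]].
  apply (improper_sym_le g _ 1).
  - apply (improper_ext (fun u => f1 (t - u) * d2 (t - (t - u))));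
      [intro u; unfold g; f_equal; f_equal; ring|].
    apply (improper_reflect (fun v => f1 v * d2 (t - v))), conv_deriv_improper.
  - intros S HS. rewrite RInt_fold by exact Hg. rewrite (RInt_ext _ psi) by (intros; apply Hfold).
    rewrite <- (RInt_Chasles_R psi 0 1 S Hpsi).
    assert (RInt psi 1 S <= 0).
    { apply RInt_nonpos; [exact HS | apply ex_RInt_continuity, Hpsi|].
      intros x Hx. apply Rlt_le, Hneg. lra. }
    lra.
Qed.

Lemma conv_diff_quotient (t h : R) : h <> 0 ->
  improper_integral_R (fun v => f1 v * ((f2 (t + h - v) - f2 (t - v)) / h - d2 (t - v)))
    ((conv f1 f2 (t + h) - conv f1 f2 t) / h - conv f1 d2 t).
Proof.
  intro Hh.
  pose proof (improper_lin _ _ 1 (-1) _ _ (conv_profile_improper (t + h)) (conv_profile_improper t))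
    as Hdiff.
  pose proof (improper_lin _ _ (/ h) (-1) _ _ Hdiff (conv_deriv_improper t)) as Hq.
  replace ((conv f1 f2 (t + h) - conv f1 f2 t) / h - conv f1 d2 t)
    with (/ h * (1 * conv f1 f2 (t + h) + -1 * conv f1 f2 t) + -1 * conv f1 d2 t) by (field; exact Hh).
  apply (improper_ext _ _ _) with (2 := Hq). intro v. field. exact Hh.
Qed.

(* The error integrand has a uniform exponential tail bound, by the mean value theorem. *)
Lemma conv_quotient_error_decay (t h : R) : h <> 0 ->
  exp_decay (fun v => f1 v * ((f2 (t + h - v) - f2 (t - v)) / h - d2 (t - v))) (K1 * (2 * B2)).
Proof.
  intros Hh v. destruct (diff_quotient_mvt f2 d2 (t - v) h (prof_deriv Hp2) Hh) as [xi [E _]].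
  replace (t + h - v) with (t - v + h) by ring. rewrite E, Rabs_mult.
  assert (Hd : Rabs (d2 xi - d2 (t - v)) <= 2 * B2).
  { unfold Rminus at 1. eapply Rle_trans; [apply Rabs_triang|]. rewrite Rabs_Ropp.
    pose proof (prof_dbound Hp2 xi). pose proof (prof_dbound Hp2 (t - v)). lra. }
  replace (K1 * (2 * B2) * exp (- Rabs v)) with (K1 * exp (- Rabs v) * (2 * B2)) by ring.
  apply Rmult_le_compat; [apply Rabs_pos | apply Rabs_pos | apply (prof_exp_decay Hp1) | exact Hd].
Qed.

Lemma conv_quotient_error_cont (t h : R) :
  continuity (fun v => f1 v * ((f2 (t + h - v) - f2 (t - v)) / h - d2 (t - v))).
Proof.
  apply continuity_mult; [apply (prof_cont Hp1)|].
  apply continuity_minus; [|apply continuity_comp_sub, (prof_dcont Hp2)]. unfold Rdiv.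
  apply continuity_mult; [apply continuity_minus; apply continuity_comp_sub, (prof_cont Hp2)|].
  apply continuity_const. intros ? ?; reflexivity.
Qed.

(* Differentiation under the integral: uniform continuity of d2 on a compact
   set makes the error integrand small on [-R, R]; the tail bound controls the rest. *)
Lemma conv_deriv (t : R) : derivable_pt_lim (conv f1 f2) t (conv f1 d2 t).
Proof.
  intros eps He.
  pose proof (exp_decay_coef_nonneg _ _ (prof_exp_decay Hp1)) as HK1.
  set (M := K1 * (2 * B2)).
  destruct (exp_neg_small (2 * M) (eps / 2)) as [R [HR HRsmall]]; [lra|].
  set (w := eps / (4 * (R + 1) * (K1 + 1))).
  assert (Hw : 0 < w) by (apply Rdiv_lt_0_compat; [lra | apply Rmult_lt_0_compat; lra]).
  assert (Hwe : 2 * R * (K1 * w) <= eps / 2).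
  { assert (Ew : w * (4 * (R + 1) * (K1 + 1)) = eps) by (unfold w; field; lra).
    assert (0 <= w * R) by nra. assert (0 <= w * K1) by nra. nra. }
  destruct (Heine d2 (fun x => t - R - 1 <= x <= t + R + 1) (compact_P3 _ _)
              (fun x _ => prof_dcont Hp2 x) (mkposreal w Hw)) as [del Hdel].
  assert (Hdp : 0 < Rmin del 1) by (apply Rmin_pos; [apply cond_pos | lra]).
  exists (mkposreal _ Hdp). intros h Hh0 Hhd. simpl in Hhd.
  assert (Hh1 : Rabs h < 1) by (eapply Rlt_le_trans; [apply Hhd | apply Rmin_r]).
  assert (Hhdel : Rabs h < del) by (eapply Rlt_le_trans; [apply Hhd | apply Rmin_l]).
  set (phi := fun v => f1 v * ((f2 (t + h - v) - f2 (t - v)) / h - d2 (t - v))).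
  assert (Hmid : forall v, Rabs v <= R -> Rabs (phi v) <= K1 * w).
  { intros v Hv. destruct (diff_quotient_mvt f2 d2 (t - v) h (prof_deriv Hp2) Hh0) as [xi [E Hxi]].
    unfold phi. replace (t + h - v) with (t - v + h) by ring. rewrite E, Rabs_mult.
    apply Rabs_le_between in Hv. apply Rabs_le_between in Hxi.
    assert (Hd : Rabs (d2 xi - d2 (t - v)) < w)
      by (apply Hdel; simpl; [lra | lra | apply Rabs_def1; lra]).
    rewrite Rabs_right by (apply Rle_ge, Rlt_le, (prof_pos Hp1)).
    apply Rmult_le_compat; [apply Rlt_le, (prof_pos Hp1) | apply Rabs_pos
      | apply (prof_le Hp1) | lra]. }
  apply Rle_lt_trans with (2 * R * (K1 * w) + 2 * M * exp (- R)).
  - apply (improper_sym_abs phi _ R); [apply conv_diff_quotient, Hh0|].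
    intros S HS. apply RInt_sym_split_bound;
      [apply conv_quotient_error_cont | apply conv_quotient_error_decay, Hh0 | exact Hmid | lra].
  - specialize (HRsmall R (Rle_refl R)). lra.
Qed.

End Convolution.

(* Logarithms of the products P in the context. *)

Record log_repr (P S s : R -> R) (C : R) : Prop := {
  lr_exp : forall t, P t = exp (S t);
  lr_deriv : forall t, derivable_pt_lim S t (s t);
  lr_cont : continuity s;
  lr_nonneg : forall t, 0 <= t -> 0 <= s t;
  lr_bound : forall t, Rabs (s t) <= C * Rabs t;
  lr_even : forall t, S (- t) = S t }.
Arguments lr_exp {P S s C}.
Arguments lr_deriv {P S s C}.
Arguments lr_cont {P S s C}.
Arguments lr_nonneg {P S s C}.
Arguments lr_bound {P S s C}.
Arguments lr_even {P S s C}.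

Lemma log_repr_ext {P Q S s : R -> R} {C : R} :
  (forall t, P t = Q t) -> log_repr Q S s C -> log_repr P S s C.
Proof. intros E [He Hd Hc Hn Hb Hv]. split; auto. intro t. rewrite E. apply He. Qed.

Lemma log_repr_one : log_repr (fun _ => 1) (fun _ => 0) (fun _ => 0) 0.
Proof.
  split.
  - intro. rewrite exp_0. reflexivity.
  - intro. apply derivable_pt_lim_const.
  - apply continuity_const. intros ? ?; reflexivity.
  - intros; lra.
  - intro t. rewrite Rabs_R0. lra.
  - reflexivity.
Qed.

Lemma log_repr_mult {P Q S S' s s' : R -> R} {C C' : R} :
  log_repr P S s C -> log_repr Q S' s' C' ->
  log_repr (fun t => P t * Q t) (fun t => S t + S' t) (fun t => s t + s' t) (C + C').
Proof.
  intros [He Hd Hc Hn Hb Hv] [He' Hd' Hc' Hn' Hb' Hv']. split.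
  - intro t. rewrite exp_plus, He, He'. reflexivity.
  - intro t. apply derivable_pt_lim_plus; auto.
  - apply continuity_plus; auto.
  - intros t Ht. pose proof (Hn t Ht). pose proof (Hn' t Ht). lra.
  - intro t. eapply Rle_trans; [apply Rabs_triang|]. pose proof (Hb t). pose proof (Hb' t). lra.
  - intro t. rewrite Hv, Hv'. reflexivity.
Qed.

Definition log_factor (b t : R) : R := ln (1 + t ^ 2 / b ^ 2).

Definition dlog_factor (b t : R) : R := (2 * t / b ^ 2) / (1 + t ^ 2 / b ^ 2).

Lemma sq_ratio_nonneg (b t : R) : b <> 0 -> 0 <= t ^ 2 / b ^ 2.
Proof. intro Hb. apply Rdiv_le_0_compat; [apply pow2_ge_0 | apply pow2_gt_0, Hb]. Qed.

Lemma log_factor_deriv (b t : R) : b <> 0 -> derivable_pt_lim (log_factor b) t (dlog_factor b t).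
Proof.
  intro Hb. pose proof (sq_ratio_nonneg b t Hb). pose proof (pow2_gt_0 b Hb).
  apply is_derive_Reals. unfold log_factor, dlog_factor. auto_derive.
  - unfold Rdiv in *. simpl in *. lra.
  - field. split; [exact Hb | pose proof (pow2_ge_0 t); lra].
Qed.

Lemma dlog_factor_cont (b : R) : b <> 0 -> continuity (dlog_factor b).
Proof.
  intro Hb. unfold dlog_factor. apply continuity_div.
  - reg.
  - reg.
  - intro t. pose proof (sq_ratio_nonneg b t Hb). lra.
Qed.

Lemma log_repr_factor (b : R) : b <> 0 ->
  log_repr (fun t => 1 + t ^ 2 / b ^ 2) (log_factor b) (dlog_factor b) (2 / b ^ 2).
Proof.
  intro Hb. pose proof (pow2_gt_0 b Hb). split.
  - intro t. unfold log_factor. rewrite exp_ln; [reflexivity|]. pose proof (sq_ratio_nonneg b t Hb). lra.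
  - intro t. apply log_factor_deriv, Hb.
  - apply dlog_factor_cont, Hb.
  - intros t Ht. pose proof (sq_ratio_nonneg b t Hb). unfold dlog_factor.
    apply Rdiv_le_0_compat; [apply Rdiv_le_0_compat|]; lra.
  - intro t. pose proof (sq_ratio_nonneg b t Hb). unfold dlog_factor.
    unfold Rdiv.
    rewrite !Rabs_mult, !Rabs_inv, (Rabs_right 2), (Rabs_right (b ^ 2)), (Rabs_right (1 + _)) by lra.
    assert (Hinv : 0 < / (1 + t ^ 2 * / b ^ 2) <= 1).
    { split; [apply Rinv_0_lt_compat; unfold Rdiv in *; lra|].
      rewrite <- Rinv_1. apply Rinv_le_contravar; unfold Rdiv in *; lra. }
    pose proof (Rabs_pos t). assert (0 < / b ^ 2) by (apply Rinv_0_lt_compat; lra).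
    assert (0 <= 2 * Rabs t * / b ^ 2) by (apply Rmult_le_pos; lra). nra.
  - intro t. unfold log_factor. f_equal. f_equal. f_equal. ring.
Qed.

Lemma log_repr_finite (P : R -> R) : finite_prod_data P -> exists S s C, log_repr P S s C.
Proof.
  intros [l [Hl E]].
  cut (exists S s C, log_repr (fun t => fold_right (fun b acc => (1 + t ^ 2 / b ^ 2) * acc) 1 l) S s C).
  { intros (S & s & C & H). exists S, s, C. apply (log_repr_ext E H). }
  clear E. induction Hl as [|b l Hb _ (S & s & C & IH)].
  - exists (fun _ => 0), (fun _ => 0), 0. apply log_repr_one.
  - do 3 eexists. apply (log_repr_mult (log_repr_factor b Hb) IH).
Qed.

Lemma partial_prod_ge1 (beta : nat -> R) (t : R) (N : nat) :
  (forall n, beta n <> 0) -> 1 <= partial_prod beta t N.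
Proof.
  intro Hb. induction N as [|N IH]; cbn [partial_prod]; [lra|].
  pose proof (sq_ratio_nonneg (beta N) t (Hb N)).
  assert (1 * 1 <= partial_prod beta t N * (1 + t ^ 2 / beta N ^ 2))
    by (apply Rmult_le_compat; lra). lra.
Qed.

Lemma partial_prod_exp (beta : nat -> R) (t : R) (N : nat) : (forall n, beta n <> 0) ->
  partial_prod beta t (S N) = exp (sum_f_R0 (fun k => log_factor (beta k) t) N).
Proof.
  intro Hb. pose proof (fun k => lr_exp (log_repr_factor (beta k) (Hb k)) t) as Ef.
  induction N as [|N IH].
  - cbn [partial_prod sum_f_R0]. rewrite <- Ef. ring.
  - change (partial_prod beta t (S (S N)))
      with (partial_prod beta t (S N) * (1 + t ^ 2 / beta (S N) ^ 2)).
    rewrite IH, Ef. cbn [sum_f_R0]. rewrite exp_plus. reflexivity.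
Qed.

Lemma partial_prod_even (beta : nat -> R) (t : R) (N : nat) :
  partial_prod beta (- t) N = partial_prod beta t N.
Proof.
  induction N as [|N IH]; cbn [partial_prod]; [reflexivity|].
  rewrite IH. do 3 f_equal. ring.
Qed.

Lemma log_sum_deriv (beta : nat -> R) (N : nat) (t : R) : (forall n, beta n <> 0) ->
  derivable_pt_lim (fun x => sum_f_R0 (fun k => log_factor (beta k) x) N) t
    (SP (fun n x => dlog_factor (beta n) x) N t).
Proof.
  intro Hb. induction N as [|N IH]; cbn [SP sum_f_R0].
  - apply log_factor_deriv, Hb.
  - apply derivable_pt_lim_plus; [exact IH | apply log_factor_deriv, Hb].
Qed.

Lemma Un_cv_const (c : R) : Un_cv (fun _ => c) c.
Proof. intros e He. exists 0%nat. intros. unfold Rdist. rewrite Rminus_diag, Rabs_R0. exact He. Qed.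

Lemma dlog_series_normal (beta : nat -> R) (s0 : R) : (forall n, beta n <> 0) ->
  Un_cv (sum_f_R0 (fun n => / beta n ^ 2)) s0 -> CVN_R (fun n t => dlog_factor (beta n) t).
Proof.
  intros Hb Hs0 r. exists (fun n => 2 * r / beta n ^ 2), (2 * r * s0). split.
  - apply Un_cv_ext with (fun n => 2 * r * sum_f_R0 (fun k => / beta k ^ 2) n).
    + intro n. rewrite scal_sum. apply sum_eq. intros i _. pose proof (pow2_gt_0 _ (Hb i)).
      pose proof (cond_pos r). rewrite Rabs_right; [unfold Rdiv; ring|].
      apply Rle_ge, Rdiv_le_0_compat; lra.
    + apply CV_mult; [apply Un_cv_const | exact Hs0].
  - intros n y Hy. unfold Boule in Hy. rewrite Rminus_0_r in Hy.
    eapply Rle_trans; [apply (lr_bound (log_repr_factor _ (Hb n)))|].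
    pose proof (pow2_gt_0 _ (Hb n)).
    replace (2 * r / beta n ^ 2) with (2 / beta n ^ 2 * r) by (unfold Rdiv; ring).
    apply Rmult_le_compat_l; [apply Rdiv_le_0_compat; lra | lra].
Qed.

Lemma dlog_partial_sum_bound (beta : nat -> R) (s0 t : R) (n : nat) : (forall n, beta n <> 0) ->
  Un_cv (sum_f_R0 (fun n => / beta n ^ 2)) s0 ->
  Rabs (SP (fun n x => dlog_factor (beta n) x) n t) <= 2 * s0 * Rabs t.
Proof.
  intros Hb Hs0.
  assert (Hinv : forall n, 0 <= / beta n ^ 2)
    by (intro k; apply Rlt_le, Rinv_0_lt_compat, pow2_gt_0, Hb).
  unfold SP. eapply Rle_trans; [apply sum_f_R0_triangle|].
  eapply Rle_trans; [apply (sum_Rle _ (fun k => / beta k ^ 2 * (2 * Rabs t)))|].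
  { intros k _.
    replace (/ beta k ^ 2 * (2 * Rabs t)) with (2 / beta k ^ 2 * Rabs t) by (unfold Rdiv; ring).
    apply (lr_bound (log_repr_factor _ (Hb k))). }
  rewrite <- (scal_sum (fun k => / beta k ^ 2) n (2 * Rabs t)).
  pose proof (sum_incr _ n _ Hs0 Hinv). pose proof (Rabs_pos t).
  replace (2 * s0 * Rabs t) with (2 * Rabs t * s0) by ring. apply Rmult_le_compat_l; lra.
Qed.

Lemma log_sum_cv (beta : nat -> R) (p t : R) : (forall n, beta n <> 0) ->
  Un_cv (partial_prod beta t) p -> Un_cv (fun N => sum_f_R0 (fun k => log_factor (beta k) t) N) (ln p).
Proof.
  intros Hb HP.
  assert (P1 : 1 <= p).
  { apply (@Rle_cv_lim (fun _ => 1) (partial_prod beta t));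
      [intro; apply partial_prod_ge1, Hb | apply Un_cv_const | apply HP]. }
  apply Un_cv_ext with (fun N => ln (partial_prod beta t (N + 1))).
  - intro N. rewrite Nat.add_1_r, partial_prod_exp, ln_exp by exact Hb. reflexivity.
  - apply (continuity_seq ln (fun N => partial_prod beta t (N + 1))).
    + apply derivable_continuous_pt. exists (/ p). apply derivable_pt_lim_ln. lra.
    + apply CV_shift', HP.
Qed.

(* Infinite products: S = ln P is the sum of the log-factors, and the series of
   their derivatives converges normally, so it may be differentiated term by term. *)
Lemma log_repr_infinite (P : R -> R) : infinite_prod_data P -> exists S s C, log_repr P S s C.
Proof.
  intros [beta [Hb [[s0 Hs0] HP]]].
  set (fn := fun n t => dlog_factor (beta n) t).
  assert (P1 : forall t, 1 <= P t).
  { intro t. apply (@Rle_cv_lim (fun _ => 1) (partial_prod beta t));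
      [intro; apply partial_prod_ge1, Hb | apply Un_cv_const | apply HP]. }
  pose proof (dlog_series_normal beta s0 Hb Hs0) as HC.
  set (cv := CVN_R_CVS fn HC).
  exists (fun t => ln (P t)), (SFL fn cv), (2 * s0). split.
  - intro t. rewrite exp_ln; [reflexivity|]. pose proof (P1 t). lra.
  - intro x. assert (Hr : 0 < Rabs x + 1) by (pose proof (Rabs_pos x); lra).
    apply (CVU_derivable (fun N t => sum_f_R0 (fun k => log_factor (beta k) t) N) (fun n => SP fn n)
             _ _ 0 (mkposreal _ Hr)).
    + apply CVN_CVU, HC.
    + intros y _. apply log_sum_cv, HP. exact Hb.
    + intros n y _. apply log_sum_deriv, Hb.
    + unfold Boule. simpl. rewrite Rminus_0_r. lra.
  - intro x. apply SFL_continuity; [apply HC|]. intros n y. apply dlog_factor_cont, Hb.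
  - intros t Ht. unfold SFL. destruct (cv t) as [l Hl].
    apply (@Rle_cv_lim (fun _ => 0) _ _ _
             (fun N => cond_pos_sum _ N (fun k => lr_nonneg (log_repr_factor _ (Hb k)) t Ht))
             (Un_cv_const 0) Hl).
  - intro t. unfold SFL. destruct (cv t) as [l Hl].
    replace (Rabs l) with (Rabs (0 - l)) by (rewrite Rminus_0_l, Rabs_Ropp; reflexivity).
    apply (cv_dist_le _ _ 0 _ 0 Hl). intros n _. rewrite Rminus_0_l, Rabs_Ropp.
    apply dlog_partial_sum_bound; assumption.
  - intro t. f_equal. apply (UL_sequence (partial_prod beta (- t))); [apply HP|].
    apply Un_cv_ext with (partial_prod beta t); [intro n; symmetry; apply partial_prod_even | apply HP].
Qed.

(* Context weights as potentials. *)

Record potential (q dq : R -> R) (T a b : R) : Prop := {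
  pot_deriv : forall t, derivable_pt_lim q t (dq t);
  pot_dcont : continuity dq;
  pot_even : forall t, q (- t) = q t;
  pot_nonneg : forall t, 0 <= q t;
  pot_incr : forall t, 0 < t -> 0 < dq t;
  pot_coef_a : 0 <= a;
  pot_coef_b : 0 <= b;
  pot_grows : forall t, T <= Rabs t -> Rabs t <= q t;
  pot_dbound : forall t, T <= Rabs t -> Rabs (dq t) <= a * q t + b * q t ^ 2 }.
Arguments pot_deriv {q dq T a b}.
Arguments pot_dcont {q dq T a b}.
Arguments pot_even {q dq T a b}.
Arguments pot_nonneg {q dq T a b}.
Arguments pot_incr {q dq T a b}.
Arguments pot_coef_a {q dq T a b}.
Arguments pot_coef_b {q dq T a b}.
Arguments pot_grows {q dq T a b}.
Arguments pot_dbound {q dq T a b}.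

Lemma exp_neg_poly_bound (a b Y : R) : 0 <= a -> 0 <= b -> 0 <= Y ->
  (a * Y + b * Y ^ 2) * exp (- Y) <= a + 4 * b.
Proof.
  intros Ha Hb HY. rewrite exp_Ropp. pose proof (exp_pos Y).
  pose proof (exp_ineq1_le Y). pose proof (exp_ineq1_le (Y / 2)). pose proof (exp_pos (Y / 2)).
  assert (E : exp Y = exp (Y / 2) * exp (Y / 2)) by (rewrite <- exp_plus; f_equal; field).
  assert (HY1 : Y <= exp Y) by lra.
  assert (HY2 : Y ^ 2 <= 4 * exp Y) by (rewrite E; simpl; nra).
  apply Rmult_le_reg_r with (exp Y); [lra|]. rewrite Rmult_assoc, Rinv_l, Rmult_1_r by lra. nra.
Qed.

(* exp (- q) of a potential is a decay profile: the tail and the derivative bounds come from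
   the growth of q, the rest from compactness. *)
Lemma profile_of_potential {q dq : R -> R} {T a b : R} : potential q dq T a b ->
  exists K B, decay_profile (fun x => exp (- q x)) (fun x => - dq x * exp (- q x)) K B.
Proof.
  intros Hq. pose proof (Rmax_l T 0). pose proof (Rmax_r T 0). set (T' := Rmax T 0) in *.
  set (d := fun x => - dq x * exp (- q x)).
  assert (Hqc : continuity q)
    by (intro x; apply derivable_continuous_pt; exists (dq x); apply (pot_deriv Hq)).
  assert (Hdc : continuity d).
  { apply continuity_mult; [apply continuity_opp, (pot_dcont Hq)|].
    apply (continuity_comp (fun x => - q x) exp); [apply continuity_opp, Hqc | apply continuity_exp]. }
  assert (Outer : forall x, T <= Rabs x -> Rabs (d x) <= a + 4 * b).
  { intros x Hx. unfold d.
    rewrite Rabs_mult, Rabs_Ropp, (Rabs_right (exp _)) by (apply Rle_ge, Rlt_le, exp_pos).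
    eapply Rle_trans;
      [| apply (exp_neg_poly_bound a b (q x));
           [apply (pot_coef_a Hq) | apply (pot_coef_b Hq) | apply (pot_nonneg Hq)]].
    apply Rmult_le_compat_r; [apply Rlt_le, exp_pos | apply (pot_dbound Hq), Hx]. }
  destruct (continuity_ab_maj (fun x => Rabs (d x)) (- T') T' ltac:(lra)
              (fun x _ => continuity_comp _ _ Hdc Rcontinuity_abs x)) as [Mx [HMx _]].
  exists (exp T'), (Rmax (Rabs (d Mx)) (a + 4 * b)). split.
  - intro x. replace (d x) with (exp (- q x) * - dq x) by (unfold d; ring).
    apply (derivable_pt_lim_comp (fun x => - q x) exp).
    + apply derivable_pt_lim_opp, (pot_deriv Hq).
    + apply derivable_pt_lim_exp.
  - exact Hdc.
  - intro x. rewrite (pot_even Hq). reflexivity.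
  - intro x. apply exp_pos.
  - intro x. rewrite <- exp_plus. apply exp_le. pose proof (pot_nonneg Hq x).
    destruct (Rle_dec T (Rabs x)) as [Hx|Hx].
    + pose proof (pot_grows Hq x Hx). lra.
    + lra.
  - intro x. destruct (Rle_dec T (Rabs x)) as [Hx|Hx].
    + eapply Rle_trans; [apply Outer, Hx | apply Rmax_r].
    + eapply Rle_trans; [| apply Rmax_l]. apply HMx. apply Rabs_le_between. lra.
  - intros x Hx. unfold d. pose proof (pot_incr Hq x Hx). pose proof (exp_pos (- q x)). nra.
Qed.

Lemma pow_even_abs (t : R) (n : nat) : Rabs t ^ (2 * n) = t ^ (2 * n).
Proof. rewrite !pow_mult, pow2_abs. reflexivity. Qed.

Lemma pow_even_opp (t : R) (n : nat) : (- t) ^ (2 * n) = t ^ (2 * n).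
Proof. rewrite !pow_mult. f_equal. ring. Qed.

Lemma pow_even_nonneg (t : R) (n : nat) : 0 <= t ^ (2 * n).
Proof. rewrite <- pow_even_abs. apply pow_le, Rabs_pos. Qed.

Section ExplicitForm.
Variables (q P S s : R -> R) (k mu C T : R) (m : nat).
Hypotheses (Hk : 0 < k) (Hmu : 0 <= mu) (Hm : (1 <= m)%nat) (Hr : log_repr P S s C) (HT : 1 <= T).
Hypothesis Hq : forall t, q t = k * t ^ (2 * m) * exp (mu * t ^ 2) * P t.
Hypothesis Hgrow : forall t, T <= t -> t <= q t.

Let E (t : R) : R := mu * t ^ 2 + S t.

Let dq (t : R) : R := k * (INR (2 * m) * t ^ (2 * m - 1)) * exp (E t) + q t * (2 * mu * t + s t).

Lemma form_exp : forall t, q t = k * t ^ (2 * m) * exp (E t).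
Proof. intro t. rewrite Hq, (lr_exp Hr), Rmult_assoc, <- exp_plus. reflexivity. Qed.

Lemma exponent_deriv : forall t, derivable_pt_lim E t (2 * mu * t + s t).
Proof.
  intro t. replace (2 * mu * t + s t) with (mu * (INR 2 * t ^ Nat.pred 2) + s t) by (simpl; ring).
  apply (derivable_pt_lim_plus (fun t => mu * t ^ 2) S);
    [apply derivable_pt_lim_scal, derivable_pt_lim_pow | apply (lr_deriv Hr)].
Qed.

Lemma form_deriv : forall t, derivable_pt_lim q t (dq t).
Proof.
  intro t.
  apply derivable_pt_lim_ext with (f := fun t => k * t ^ (2 * m) * exp (E t));
    [intro; symmetry; apply form_exp|].
  replace (dq t) with (k * (INR (2 * m) * t ^ Nat.pred (2 * m)) * exp (E t)
                       + k * t ^ (2 * m) * (exp (E t) * (2 * mu * t + s t)))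
    by (unfold dq; rewrite form_exp, Nat.sub_1_r; ring).
  apply (derivable_pt_lim_mult (fun t => k * t ^ (2 * m)) (fun t => exp (E t))).
  - apply derivable_pt_lim_scal, derivable_pt_lim_pow.
  - apply (derivable_pt_lim_comp E exp); [apply exponent_deriv | apply derivable_pt_lim_exp].
Qed.

Lemma form_dcont : continuity dq.
Proof.
  assert (Hqc : continuity q)
    by (intro x; apply derivable_continuous_pt; exists (dq x); apply form_deriv).
  assert (HEc : continuity E)
    by (intro x; apply derivable_continuous_pt; exists (2 * mu * x + s x); apply exponent_deriv).
  unfold dq. apply continuity_plus; apply continuity_mult.
  - apply continuity_scal, continuity_scal, derivable_continuous, derivable_pow.
  - apply (continuity_comp E exp); [exact HEc | apply continuity_exp].
  - exact Hqc.
  - apply continuity_plus;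
      [apply continuity_scal, derivable_continuous, derivable_id | apply (lr_cont Hr)].
Qed.

Lemma form_even : forall t, q (- t) = q t.
Proof. intro t. rewrite !form_exp, pow_even_opp. unfold E. rewrite (lr_even Hr). do 3 f_equal. ring. Qed.

Lemma form_nonneg : forall t, 0 <= q t.
Proof.
  intro t. rewrite form_exp.
  apply Rmult_le_pos; [apply Rmult_le_pos; [lra | apply pow_even_nonneg] | apply Rlt_le, exp_pos].
Qed.

Lemma form_dq_pos : forall t, 0 < t -> 0 < dq t.
Proof.
  intros t Ht. unfold dq. pose proof (form_nonneg t). pose proof (lr_nonneg Hr t (Rlt_le _ _ Ht)).
  assert (0 < k * (INR (2 * m) * t ^ (2 * m - 1)) * exp (E t)).
  { apply Rmult_lt_0_compat; [apply Rmult_lt_0_compat; [exact Hk|] | apply exp_pos].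
    apply Rmult_lt_0_compat; [apply lt_0_INR; lia | apply pow_lt, Ht]. }
  assert (0 <= q t * (2 * mu * t + s t)) by (apply Rmult_le_pos; nra). lra.
Qed.

Lemma form_grows : forall t, T <= Rabs t -> Rabs t <= q t.
Proof.
  intros t Ht. destruct (Rle_dec 0 t) as [Hpos|Hneg].
  - rewrite Rabs_right in * by lra. apply Hgrow, Ht.
  - rewrite Rabs_left in * by lra. rewrite <- form_even. apply Hgrow, Ht.
Qed.

Lemma form_coef_nonneg : 0 <= C.
Proof.
  pose proof (lr_bound Hr 1) as H1. pose proof (Rabs_pos (s 1)). rewrite Rabs_R1 in H1. lra.
Qed.

(* For |t| >= T >= 1 and Y = q t >= |t|: the first part of q' is at most 2m Y
   (as |t|^(2m-1) <= |t|^(2m)), the second at most (2 mu + C) Y^2. *)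
Lemma form_dbound : forall t, T <= Rabs t -> Rabs (dq t) <= INR (2 * m) * q t + (2 * mu + C) * q t ^ 2.
Proof.
  intros t Ht. pose proof (form_grows t Ht) as Hgt. pose proof (Rabs_pos t). pose proof form_coef_nonneg.
  set (Y := q t) in *.
  assert (HY : Y = k * Rabs t ^ (2 * m) * exp (E t))
    by (unfold Y; rewrite form_exp, pow_even_abs; reflexivity).
  pose proof (exp_pos (E t)). pose proof (pos_INR (2 * m)).
  assert (A1 : Rabs (k * (INR (2 * m) * t ^ (2 * m - 1)) * exp (E t)) <= INR (2 * m) * Y).
  { rewrite !Rabs_mult, <- RPow_abs, (Rabs_right k), (Rabs_right (INR _)), (Rabs_right (exp _)) by lra.
    assert (Rabs t ^ (2 * m - 1) <= Rabs t ^ (2 * m)) by (apply Rle_pow; [lra | lia]).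
    assert (0 <= k * INR (2 * m) * exp (E t)) by (apply Rmult_le_pos; [apply Rmult_le_pos|]; lra).
    rewrite HY. nra. }
  assert (A2 : Rabs (Y * (2 * mu * t + s t)) <= (2 * mu + C) * Y ^ 2).
  { assert (He : Rabs (2 * mu * t + s t) <= (2 * mu + C) * Y).
    { eapply Rle_trans; [apply Rabs_triang|]. rewrite Rabs_mult, (Rabs_right (2 * mu)) by lra.
      pose proof (lr_bound Hr t). nra. }
    rewrite Rabs_mult, (Rabs_right Y) by (apply Rle_ge, form_nonneg).
    replace ((2 * mu + C) * Y ^ 2) with (Y * ((2 * mu + C) * Y)) by ring.
    apply Rmult_le_compat_l; [apply form_nonneg | exact He]. }
  unfold dq. fold Y. eapply Rle_trans; [apply Rabs_triang | lra].
Qed.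

Lemma form_potential : potential q dq T (INR (2 * m)) (2 * mu + C).
Proof.
  split; [exact form_deriv | exact form_dcont | exact form_even | exact form_nonneg | exact form_dq_pos
    | apply pos_INR | pose proof form_coef_nonneg; lra | exact form_grows | exact form_dbound].
Qed.

End ExplicitForm.

Lemma le_Rpower_self (y alpha : R) : 1 <= y -> 0 < alpha -> y <= Rpower y (2 + alpha).
Proof.
  intros Hy Ha. unfold Rpower. rewrite <- (exp_ln y) at 1 by lra. apply exp_le.
  assert (0 <= ln y) by (rewrite <- ln_1; apply ln_le; lra). nra.
Qed.

Lemma potential_of_context (q : R -> R) : as_in_context q -> exists dq T a b, potential q dq T a b.
Proof.
  intros (k & mu & m & P & Hk & Hmu & Hm & HP & Hq & T0 & alpha & HT0 & Ha & Htail).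
  assert (Hr : exists S s C, log_repr P S s C)
    by (destruct HP; [apply log_repr_finite | apply log_repr_infinite]; assumption).
  destruct Hr as (S & s & C & Hr). pose proof (Rmax_l T0 1). pose proof (Rmax_r T0 1).
  do 4 eexists. apply (form_potential q P S s k mu C (Rmax T0 1) m); try assumption.
  intros t Ht. pose proof (Htail t ltac:(lra)). pose proof (le_Rpower_self t alpha ltac:(lra) Ha). lra.
Qed.

Lemma neg_log_increasing (c c' : R -> R) : (forall t, 0 < c t) -> (forall t, c (- t) = c t) ->
  (forall t, 0 < t -> derivable_pt_lim c t (c' t) /\ c' t < 0) ->
  exists g : R -> R,
    (forall t, c t = exp (- g t)) /\ (forall t, g (- t) = g t) /\
    (forall t, 0 < t -> exists l, derivable_pt_lim g t l /\ 0 < l).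
Proof.
  intros Hpos Heven Hder. exists (fun t => - ln (c t)). split; [|split].
  - intro t. rewrite Ropp_involutive, exp_ln; [reflexivity | apply Hpos].
  - intro t. rewrite Heven. reflexivity.
  - intros t Ht. destruct (Hder t Ht) as [Hd Hneg]. exists (- (/ c t * c' t)). split.
    + apply derivable_pt_lim_opp, (derivable_pt_lim_comp c ln);
        [exact Hd | apply derivable_pt_lim_ln, Hpos].
    + pose proof (Rinv_0_lt_compat _ (Hpos t)).
      assert (/ c t * c' t < 0) by (apply Rmult_pos_neg; assumption). lra.
Qed.

Theorem mainTheorem6 (q1 q2 : R -> R) :
  as_in_context q1 -> as_in_context q2 ->
  exists c : R -> R,
    (forall t, improper_integral_R
                 (fun v => exp (- q1 v) * exp (- q2 (t - v))) (c t)) /\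
    (forall t, c (- t) = c t) /\
    (forall t, 0 < c t) /\
    (forall t, 0 < t -> exists l, derivable_pt_lim c t l /\ l < 0) /\
    (exists g : R -> R,
       (forall t, c t = exp (- g t)) /\
       (forall t, g (- t) = g t) /\
       (forall t, 0 < t -> exists l, derivable_pt_lim g t l /\ 0 < l)).
Proof.
  intros H1 H2.
  destruct (potential_of_context q1 H1) as (dq1 & T1 & a1 & b1 & Hq1).
  destruct (potential_of_context q2 H2) as (dq2 & T2 & a2 & b2 & Hq2).
  destruct (profile_of_potential Hq1) as (K1 & B1 & Hp1).
  destruct (profile_of_potential Hq2) as (K2 & B2 & Hp2).
  set (f1 := fun x => exp (- q1 x)) in Hp1. set (f2 := fun x => exp (- q2 x)) in Hp2.
  set (d2 := fun x => - dq2 x * exp (- q2 x)) in Hp2.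
  pose proof (conv_pos Hp1 Hp2) as Hpos.
  pose proof (conv_even Hp1 Hp2) as Heven.
  assert (Hder : forall t, 0 < t -> derivable_pt_lim (conv f1 f2) t (conv f1 d2 t) /\ conv f1 d2 t < 0).
  { intros t Ht. split; [apply (conv_deriv Hp1 Hp2) | apply (conv_deriv_neg Hp1 Hp2), Ht]. }
  exists (conv f1 f2). split; [|split; [|split; [|split]]].
  - intro t. apply (conv_profile_improper Hp1 Hp2).
  - exact Heven.
  - exact Hpos.
  - intros t Ht. exists (conv f1 d2 t). apply Hder, Ht.
  - apply (neg_log_increasing _ _ Hpos Heven Hder).
Qed.
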